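(* Consider the directed graph on a finite action space $X$ (with $|X|\ge2$) in which there is an edge $a\to b$ exactly when $a$ and $b$ differ in the action of a single player $i$, with resistance $R_{a\to b}=\max\{0,U_i(a)-U_i(b)\}$. Among all spanning trees rooted at any state of $X$, any tree of minimum total resistance contains an edge of resistance zero.
   Context: Finite game with players $\mathcal{D}$, finite action sets $X_i$, $X=\prod_iX_i$, and real utilities $U_i:X\to\mathbb{R}$. A spanning tree rooted at $c\in X$ is a set of edges of the graph such that every state other than $c$ has exactly one outgoing edge, $c$ has none, and from every state the edges lead to $c$. The total resistance of a tree is the sum of the resistances of its edges. *)

From HB Require Import structures.
From mathcomp Require Import all_boot all_order all_algebra.
Set Implicit Arguments. Unset Strict Implicit. Unset Printing Implicit Defensive.
Import Order.TTheory GRing.Theory Num.Theory.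
Local Open Scope ring_scope.

Definition profile (D : finType) (A : D -> finType) := {dffun forall i : D, A i}.

Definition unilateral (D : finType) (A : D -> finType) (a b : profile A) : bool :=
  [exists i, (a i != b i) && [forall j, (j != i) ==> (a j == b j)]].

(* The (unique, on edges) player whose action changes along a -> b. *)
Definition deviator (D : finType) (A : D -> finType) (a b : profile A) : option D :=
  [pick i | a i != b i].

Definition resistance (R : realDomainType) (D : finType) (A : D -> finType)
  (U : D -> profile A -> R) (a b : profile A) : R :=
  match deviator a b with
  | Some i => Num.max 0 (U i a - U i b)
  | None => 0
  end.

(* T is a spanning tree rooted at c (edges oriented towards the root). *)
Definition spanning_tree (D : finType) (A : D -> finType)
  (c : profile A) (T : {set profile A * profile A}) : Prop :=
  [/\ (forall e, e \in T -> unilateral e.1 e.2),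
      (forall x, x != c -> exists! y, (x, y) \in T),
      (forall y, (c, y) \notin T) &
      (forall x, connect [rel u v | (u, v) \in T] x c)].

Definition tree_resistance (R : realDomainType) (D : finType) (A : D -> finType)
  (U : D -> profile A -> R) (T : {set profile A * profile A}) : R :=
  \sum_(e in T) resistance U e.1 e.2.

From mathcomp Require Import all_boot all_order all_algebra.
Set Implicit Arguments. Unset Strict Implicit. Unset Printing Implicit Defensive.
Import Order.TTheory GRing.Theory Num.Theory.
Local Open Scope ring_scope.

(* As |X| >= 2, some edge (x, c) enters the root c of a minimal tree.  Since
   R_{x->c} and R_{c->x} cannot both be positive, if R_{x->c} > 0 then
   R_{c->x} = 0, and replacing (x, c) by (c, x) yields a spanning tree rooted
   at x of strictly smaller resistance. *)

Section Unilateral.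

Variables (D : finType) (A : D -> finType).
Implicit Types a b : profile A.

Lemma unilateral_sym a b : unilateral a b -> unilateral b a.
Proof.
case/existsP=> i /andP[abi /forallP abj]; apply/existsP; exists i.
rewrite eq_sym abi; apply/forallP=> j; apply/implyP=> ji.
by rewrite eq_sym (implyP (abj j) ji).
Qed.

Lemma deviator_sym a b : deviator a b = deviator b a.
Proof. by apply: eq_pick => i; rewrite eq_sym. Qed.

End Unilateral.

Section Resistance.

Variables (R : realDomainType) (D : finType) (A : D -> finType).
Variable U : D -> profile A -> R.
Implicit Types a b : profile A.

Lemma resistance_ge0 a b : 0 <= resistance U a b.
Proof. by rewrite /resistance; case: deviator => // i; rewrite le_max lexx. Qed.

Lemma resistance_sym_eq0 a b :
  resistance U a b != 0 -> resistance U b a = 0.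
Proof.
rewrite /resistance deviator_sym; case: deviator => // i.
case: (lerP (U i a - U i b) 0) => [_|gt0]; first by rewrite eqxx.
by rewrite max_l // -opprB oppr_le0 ltW.
Qed.

End Resistance.

Section Reroot.

Variables (D : finType) (A : D -> finType).
Variables (c x : profile A) (T : {set profile A * profile A}).
Hypotheses (T_succ : forall u, u != c -> exists! v, (u, v) \in T)
  (T_root : forall v, (c, v) \notin T)
  (T_connect : forall u, connect [rel u v | (u, v) \in T] u c)
  (xcT : (x, c) \in T).

Local Notation T' := ((c, x) |: T :\ (x, c)).

Lemma in_reroot e : (e \in T') = (e == (c, x)) || (e != (x, c)) && (e \in T).
Proof. by rewrite in_setU1 in_setD1. Qed.

Lemma reroot_neq : x != c.
Proof. by apply: contraTneq xcT => ->; apply: T_root. Qed.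

Lemma reroot_succ u : u != x -> exists! v, (u, v) \in T'.
Proof.
move=> ux; have [->|uc] := eqVneq u c.
  exists x; split=> [|v]; first by rewrite in_reroot eqxx.
  by rewrite in_reroot (negbTE (T_root v)) andbF orbF => /eqP[].
have [v [uvT uv_uniq]] := T_succ uc.
have neq_xc w : (u, w) != (x, c) by apply: contraNneq ux => -[->].
exists v; split=> [|w]; first by rewrite in_reroot neq_xc uvT orbT.
by rewrite in_reroot neq_xc /= => /orP[/eqP[uc'] | /uv_uniq]; first rewrite uc' eqxx in uc.
Qed.

Lemma reroot_root v : (x, v) \notin T'.
Proof.
rewrite in_reroot negb_or negb_and negbK; apply/andP; split.
  by apply: contraNneq reroot_neq => -[->].
have [->|vc] := eqVneq v c; first by rewrite eqxx.
apply/orP; right; apply: contra vc => xvT.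
have [w [_ xw_uniq]] := T_succ reroot_neq.
by rewrite -(xw_uniq _ xvT) (xw_uniq _ xcT) eqxx.
Qed.

Lemma reroot_connect u : connect [rel u v | (u, v) \in T'] u x.
Proof.
case/connectP: (T_connect u) => p; elim: p u => [|v p IHp] u /=.
  by move=> _ <-; apply: connect1; rewrite /= in_reroot eqxx.
case/andP=> uvT /IHp/[apply] vx; have [->|ux] := eqVneq u x; first exact: connect0.
apply: connect_trans vx; apply: connect1.
by rewrite /= in_reroot uvT andbT; apply/orP; right; apply: contraNneq ux => -[->].
Qed.

End Reroot.

Lemma spanning_tree_reroot (D : finType) (A : D -> finType)
    (c x : profile A) (T : {set profile A * profile A}) :
  spanning_tree c T -> (x, c) \in T ->
  spanning_tree x ((c, x) |: T :\ (x, c)).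
Proof.
case=> T_unilateral T_succ T_root T_connect xcT; split.
- move=> e; rewrite in_reroot => /orP[/eqP-> | /andP[_ /T_unilateral //]].
  exact: unilateral_sym (T_unilateral _ xcT).
- exact: reroot_succ.
- exact: reroot_root.
- exact: reroot_connect.
Qed.

Lemma spanning_tree_root_in (D : finType) (A : D -> finType)
    (c z : profile A) (T : {set profile A * profile A}) :
  spanning_tree c T -> z != c -> exists x, (x, c) \in T.
Proof.
case=> _ _ _ /(_ z)/connectP[p] + + zc; case/lastP: p => [_ /= cz | p y].
  by rewrite cz eqxx in zc.
rewrite rcons_path last_rcons => /andP[_ yT] cy.
by exists (last z p); rewrite cy.
Qed.

Lemma tree_resistance_reroot (R : realDomainType) (D : finType)
    (A : D -> finType) (U : D -> profile A -> R)
    (c x : profile A) (T : {set profile A * profile A}) :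
  (x, c) \in T -> (c, x) \notin T ->
  tree_resistance U ((c, x) |: T :\ (x, c))
  = tree_resistance U T - resistance U x c + resistance U c x.
Proof.
move=> xcT cxT; rewrite /tree_resistance (big_setD1 _ xcT) big_setU1 /=.
  by rewrite [RHS]addrC [resistance U x c + _]addrC addrK.
by rewrite in_setD1 negb_and cxT orbT.
Qed.

Theorem lemma9 (R : realDomainType) (D : finType) (A : D -> finType)
  (U : D -> profile A -> R) :
  (2 <= #|{: profile A}|)%N ->
  forall (c : profile A) (T : {set profile A * profile A}),
    spanning_tree c T ->
    (forall (c' : profile A) (T' : {set profile A * profile A}),
        spanning_tree c' T' -> tree_resistance U T <= tree_resistance U T') ->
    exists2 e, e \in T & resistance U e.1 e.2 = 0.
Proof.
move=> card_gt1 c T tree T_min.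
have [z zc] : exists z, z != c.
  case/card_gt1P: card_gt1 => u [v [_ _ uv]].
  by have [<-|uc] := eqVneq u c; [exists v; rewrite eq_sym | exists u].
have [x xcT] := spanning_tree_root_in tree zc.
have [xc0|xc_neq0] := eqVneq (resistance U x c) 0; first by exists (x, c).
have cxT : (c, x) \notin T by case: tree.
have := T_min x _ (spanning_tree_reroot tree xcT).
rewrite tree_resistance_reroot // (resistance_sym_eq0 xc_neq0) addr0.
rewrite lerDl oppr_ge0 => xc_le0.
by case/negP: xc_neq0; rewrite eq_le xc_le0 resistance_ge0.
Qed.
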